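(* Let $R$ be a supertropical semiring such that $eR$ is a semifield with $\mathcal G\neq\{e\}$, let $(q,b)$ be a quadratic pair on an $R$-module $V$, and let $x,y,w\in V$ be anisotropic vectors (so that $x+y$ is also anisotropic). Then: (a) $\operatorname{CS}(x+y,w)\le \operatorname{CS}(x,w)+\operatorname{CS}(y,w)$ in $eR$. (b) If $q(x+y)\not\cong_\nu q(x)+q(y)$ and $\operatorname{CS}(x,w)+\operatorname{CS}(y,w)\neq 0$, then $\operatorname{CS}(x+y,w)<\operatorname{CS}(x,w)+\operatorname{CS}(y,w)$. (c) If $q(x+y)\cong_\nu q(x)+q(y)$ and at least one of the following holds: (c1) $e q(x)\cdot\operatorname{CS}(y,w)=eq(y)\cdot\operatorname{CS}(x,w)$; (c2) $\operatorname{CS}(x,w)=\operatorname{CS}(y,w)$; (c3) $q(x)\cong_\nu q(y)$; then $\operatorname{CS}(x+y,w)=\operatorname{CS}(x,w)+\operatorname{CS}(y,w)$.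
   Context: All semirings are commutative with $1$. A semiring $R$ is supertropical if $e:=1+1$ satisfies $e+e=e$ and, for all $x,y\in R$: if $ex\neq ey$ then $x+y\in\{x,y\}$, and if $ex=ey$ then $x+y=ey$. $eR$ is totally ordered by $u\le v\iff u+v=v$; write $x\le_\nu y$, $x\cong_\nu y$, $x<_\nu y$ for $ex\le ey$, $ex=ey$, $ex<ey$. $\mathcal G=eR\setminus\{0\}$; ''$eR$ is a semifield'' means every element of $\mathcal G$ is invertible in $eR$. A quadratic form on an $R$-module $V$ is a map $q:V\to R$ with $q(ax)=a^2q(x)$ such that some symmetric bilinear $b$ satisfies $q(x+y)=q(x)+q(y)+b(x,y)$; $(q,b)$ is a quadratic pair. A vector $x\in V$ is anisotropic if $x\ne0$ and $q(x)\neq 0$. For anisotropic $x,y$, the CS-ratio is $\operatorname{CS}(x,y):=\dfrac{e\,b(x,y)^2}{e\,q(x)q(y)}\in eR$ (quotient in the semifield $eR$). *)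

From HB Require Import structures.
From mathcomp Require Import all_boot all_order all_algebra.
From Stdlib Require Import ClassicalEpsilon.
Set Implicit Arguments. Unset Strict Implicit. Unset Printing Implicit Defensive.
Import GRing.Theory.
Local Open Scope ring_scope.

Section Supertropical.
Variable R : comPzSemiRingType.

Definition st_e : R := 1 + 1.

Definition supertropical : Prop :=
  st_e + st_e = st_e /\
  (forall x y : R,
     (st_e * x <> st_e * y -> x + y = x \/ x + y = y) /\
     (st_e * x = st_e * y -> x + y = st_e * y)).

Definition e_le (u v : R) : Prop := u + v = v.
Definition e_lt (u v : R) : Prop := e_le u v /\ u <> v.

Definition nu_le (x y : R) : Prop := e_le (st_e * x) (st_e * y).
Definition nu_cong (x y : R) : Prop := st_e * x = st_e * y.

(* eR is a semifield: every nonzero element of eR is invertible in eR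
   (the unit of the multiplicative monoid eR is e). *)
Definition eR_semifield : Prop :=
  forall a : R, st_e * a <> 0 ->
    exists c : R, (st_e * a) * (st_e * c) = st_e.

Definition G_ne_e : Prop :=
  exists a : R, st_e * a <> 0 /\ st_e * a <> st_e.

(* inverse in eR (chosen; unique when it exists) *)
Definition e_inv (a : R) : R :=
  epsilon (inhabits 0)
    (fun c => (exists d, c = st_e * d) /\ (st_e * a) * c = st_e).

Definition e_div (u v : R) : R := u * e_inv v.

Variable V : lSemiModType R.

Definition quadratic_pair (q : V -> R) (b : V -> V -> R) : Prop :=
  (forall (a : R) (x : V), q (a *: x) = a ^+ 2 * q x) /\
  (forall x y : V, b x y = b y x) /\
  (forall x y z : V, b (x + y) z = b x z + b y z) /\
  (forall (a : R) (x z : V), b (a *: x) z = a * b x z) /\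
  (forall x y : V, q (x + y) = q x + q y + b x y).

Definition anisotropic (q : V -> R) (x : V) : Prop := x <> 0 /\ q x <> 0.

Definition CS (q : V -> R) (b : V -> V -> R) (x y : V) : R :=
  e_div (st_e * b x y ^+ 2) (st_e * (q x * q y)).

End Supertropical.

(* The bilinear term only increases q in the ghost order, so
   e q(x+y) >= e q(x) + e q(y), while squaring is additive on eR:
   e b(x+y,w)^2 = e b(x,w)^2 + e b(y,w)^2.  Hence CS(x+y,w) is the sum of the
   two numerators divided by a denominator dominating both denominators of
   CS(x,w) and CS(y,w), which gives (a); (b) comes from strict domination.
   Under the equality e q(x+y) = e q(x) + e q(y) of (c), the larger of
   e q(x), e q(y), say e q(y), is the common denominator, and each of (c1)-(c3)
   makes the x-summand negligible. *)
From HB Require Import structures.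
From mathcomp Require Import all_boot all_order all_algebra.
From Stdlib Require Import ClassicalEpsilon.
Set Implicit Arguments. Unset Strict Implicit. Unset Printing Implicit Defensive.
Import GRing.Theory.
Local Open Scope ring_scope.

Section GhostOrder.
Variable R : comPzSemiRingType.

Local Notation e := (st_e R).

(* The elements of eR, the "ghost" elements, are exactly the fixed points of
   multiplication by e. *)
Definition ghost (u : R) : Prop := e * u = u.

Lemma addrr_e (u : R) : u + u = e * u.
Proof. by rewrite /st_e mulrDl mul1r. Qed.

Lemma ghost_addrr (u : R) : ghost u -> u + u = u.
Proof. by rewrite addrr_e. Qed.

Lemma ghostD (u v : R) : ghost u -> ghost v -> ghost (u + v).
Proof. by rewrite /ghost mulrDr => -> ->. Qed.

Lemma ghostMr (u v : R) : ghost u -> ghost (u * v).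
Proof. by rewrite /ghost mulrA => ->. Qed.

Lemma e_le_refl (u : R) : ghost u -> e_le u u.
Proof. exact: ghost_addrr. Qed.

Lemma e_le_trans (u v t : R) : e_le u v -> e_le v t -> e_le u t.
Proof. by rewrite /e_le => uv vt; rewrite -vt addrA uv. Qed.

Lemma e_le_anti (u v : R) : e_le u v -> e_le v u -> u = v.
Proof. by rewrite /e_le => uv vu; rewrite -vu addrC uv. Qed.

Lemma e_leMr (u v t : R) : e_le u v -> e_le (u * t) (v * t).
Proof. by rewrite /e_le -mulrDl => ->. Qed.

Lemma e_leMl (u v t : R) : e_le u v -> e_le (t * u) (t * v).
Proof. by rewrite ![t * _]mulrC; apply: e_leMr. Qed.

Lemma e_leD (u u' v v' : R) : e_le u u' -> e_le v v' -> e_le (u + v) (u' + v').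
Proof. by rewrite /e_le addrACA => -> ->. Qed.

Lemma e_le_addl (u v : R) : ghost u -> e_le u (u + v).
Proof. by rewrite /e_le addrA => /ghost_addrr ->. Qed.

Lemma e_le_addr (u v : R) : ghost v -> e_le v (u + v).
Proof. by rewrite addrC; apply: e_le_addl. Qed.

Lemma e_lt_addl (u v t : R) : ghost u -> e_lt (u + v) t -> e_lt u t.
Proof.
move=> gu [uvt neq]; split; first exact: e_le_trans (e_le_addl v gu) uvt.
by move=> ut; apply: neq; apply: e_le_anti uvt _; rewrite -ut; apply: e_le_addl.
Qed.

Lemma e_lt_addr (u v t : R) : ghost v -> e_lt (u + v) t -> e_lt v t.
Proof. by rewrite addrC; apply: e_lt_addl. Qed.

Lemma addr_dominated (u' u v : R) : e_le u' u -> e_le u v -> u' + v = u + v.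
Proof. by move=> u'u uv; rewrite uv; apply: e_le_trans u'u uv. Qed.

Hypothesis hst : supertropical R.

Lemma mulee : e * e = e.
Proof. by case: hst => ee _; rewrite -addrr_e. Qed.

Lemma ghost_e (u : R) : ghost (e * u).
Proof. by rewrite /ghost mulrA mulee. Qed.

Lemma e_mulM (u v : R) : e * (u * v) = (e * u) * (e * v).
Proof. by rewrite mulrACA mulee. Qed.

Lemma e_mul_eq0 (u : R) : e * u = 0 -> u = 0.
Proof.
case: hst => _ sum eu0; have [_ sum_eq] := sum u 0.
by rewrite -[u]addr0 sum_eq ?mulr0.
Qed.

Lemma e_le_total (u v : R) : ghost u -> ghost v -> e_le u v \/ e_le v u.
Proof.
rewrite /ghost /e_le => gu gv; case: hst => _ /(_ u v) [sum_neq sum_eq].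
have [euv|euv] := boolP (e * u == e * v).
  by left; rewrite sum_eq //; apply/eqP.
by case: (sum_neq (elimN eqP euv)) => uv; [right; rewrite addrC | left].
Qed.

(* Frobenius on eR: the cross term u * v is dominated by u^2 or by v^2. *)
Lemma sqr_ghostD (u v : R) : ghost u -> ghost v -> (u + v) ^+ 2 = u ^+ 2 + v ^+ 2.
Proof.
move=> gu gv; rewrite !expr2.
have [uv|vu] := e_le_total gu gv.
  by rewrite uv; apply/esym; apply: e_le_trans (e_leMl u uv) (e_leMr v uv).
rewrite addrC vu; apply/esym; rewrite addrC.
exact: e_le_trans (e_leMl v vu) (e_leMr u vu).
Qed.

Lemma e_sqrD (u v : R) : e * (u + v) ^+ 2 = e * u ^+ 2 + e * v ^+ 2.
Proof.
have e_sqr t : e * t ^+ 2 = (e * t) ^+ 2 by rewrite !expr2 e_mulM.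
by rewrite !e_sqr mulrDr sqr_ghostD //; apply: ghost_e.
Qed.

Hypothesis hsf : eR_semifield R.

Lemma e_invP (u : R) : ghost u -> u <> 0 -> ghost (e_inv u) /\ u * e_inv u = e.
Proof.
move=> gu u0; rewrite -{2}gu.
have [c uc] : exists c, e * u * (e * c) = e by apply: hsf; rewrite gu.
have [[d ->] ->] :
    (exists d, e_inv u = e * d) /\ (e * u) * e_inv u = e.
  apply: (epsilon_spec (inhabits 0) (fun c => (exists d, c = e * d) /\ e * u * c = e)).
  by exists (e * c); split; first exists c.
by split; first exact: ghost_e.
Qed.

Lemma ghost_mulI (a u v : R) :
  ghost a -> a <> 0 -> ghost u -> ghost v -> a * u = a * v -> u = v.
Proof.
move=> ga a0 gu gv auv; have [_ aK] := e_invP ga a0.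
by rewrite -gu -gv -aK (mulrAC a _ u) auv mulrAC.
Qed.

Lemma e_leM2l (a u v : R) :
  ghost a -> a <> 0 -> ghost u -> ghost v -> e_le (a * u) (a * v) -> e_le u v.
Proof.
move=> ga a0 gu gv /(e_leMl (e_inv a)); have [_ aK] := e_invP ga a0.
by rewrite !mulrA ![e_inv a * a]mulrC aK gu gv.
Qed.

Lemma e_ltM2l (a u v : R) :
  ghost a -> a <> 0 -> ghost u -> ghost v -> e_lt u v -> e_lt (a * u) (a * v).
Proof.
move=> ga a0 gu gv [uv neq]; split; first exact: e_leMl.
by move=> /(ghost_mulI ga a0 gu gv).
Qed.

Lemma ghost_mul_neq0 (u v : R) :
  ghost u -> ghost v -> u <> 0 -> v <> 0 -> u * v <> 0.
Proof.
move=> gu gv u0 v0 uv0; have [_ uK] := e_invP gu u0.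
by apply: v0; rewrite -gv -uK mulrAC uv0 mul0r.
Qed.

(* Multiply u <= v by u^-1 v^-1. *)
Lemma e_le_inv (u v : R) :
  ghost u -> ghost v -> u <> 0 -> v <> 0 -> e_le u v -> e_le (e_inv v) (e_inv u).
Proof.
move=> gu gv u0 v0 /(e_leMr (e_inv u * e_inv v)).
have [gu' uK] := e_invP gu u0; have [gv' vK] := e_invP gv v0.
by rewrite mulrA uK [e_inv u * _]mulrC mulrA vK gu' gv'.
Qed.

Lemma e_lt_inv (u v : R) :
  ghost u -> ghost v -> u <> 0 -> v <> 0 -> e_lt u v -> e_lt (e_inv v) (e_inv u).
Proof.
move=> gu gv u0 v0 [uv neq]; split; first exact: e_le_inv.
have [_ uK] := e_invP gu u0; have [_ vK] := e_invP gv v0.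
move=> vu; apply: neq.
by rewrite -gu -vK vu -mulrA (mulrC _ u) uK mulrC gv.
Qed.

(* If the larger summand on the right were attained on the left, it would be
   attained by the matching summand, which is excluded. *)
Lemma e_ltD (u1 u2 v1 v2 : R) :
  ghost u1 -> ghost u2 -> ghost v1 -> ghost v2 ->
  e_le u1 v1 -> e_le u2 v2 -> (u1 = v1 -> v1 = 0) -> (u2 = v2 -> v2 = 0) ->
  v1 + v2 <> 0 -> e_lt (u1 + u2) (v1 + v2).
Proof.
move: u1 u2 v1 v2.
suff main u1 u2 v1 v2 : ghost u1 -> ghost u2 -> ghost v1 -> ghost v2 ->
    e_le u1 v1 -> e_le u2 v2 -> (u1 = v1 -> v1 = 0) -> (u2 = v2 -> v2 = 0) ->
    e_le v2 v1 -> v1 + v2 <> 0 -> u1 + u2 <> v1 + v2.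
  move=> u1 u2 v1 v2 g1 g2 g1' g2' le1 le2 eq1 eq2 sum0; split; first exact: e_leD.
  have [le21|le12] := e_le_total g1' g2'; last exact: main.
  by rewrite addrC [v1 + _]addrC; apply: main => //; rewrite addrC.
move=> g1 g2 _ _ _ le2 eq1 eq2 le21.
rewrite addrC le21 => v10.
have [le12|le21'] := e_le_total g1 g2; last by rewrite addrC le21' => /eq1.
rewrite le12 => u2v1.
have v21 : v2 = v1 by apply: e_le_anti le21 _; rewrite -u2v1.
by apply: v10; rewrite -v21 eq2 // v21.
Qed.

End GhostOrder.

Section CauchySchwarzRatio.
Variables (R : comPzSemiRingType) (V : lSemiModType R).
Variables (q : V -> R) (b : V -> V -> R).
Hypotheses (hst : supertropical R) (hsf : eR_semifield R).
Hypothesis hqb : quadratic_pair q b.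
Variable w : V.
Hypothesis hw : anisotropic q w.

Local Notation e := (st_e R).
Local Notation num v := (e * b v w ^+ 2).
Local Notation den v := (e * (q v * q w)).

Lemma e_q_neq0 (v : V) : anisotropic q v -> e * q v <> 0.
Proof. by move=> [_ qv0] /(e_mul_eq0 hst). Qed.

Lemma den_neq0 (v : V) : anisotropic q v -> den v <> 0.
Proof.
move=> hv; rewrite (e_mulM hst).
by apply: (ghost_mul_neq0 hst hsf); try exact: ghost_e; apply: e_q_neq0.
Qed.

Lemma ghost_inv_den (v : V) : anisotropic q v -> ghost (e_inv (den v)).
Proof. by move=> hv; case: (e_invP hst hsf (ghost_e hst _) (den_neq0 hv)). Qed.

Lemma ghost_CS (v : V) : ghost (CS q b v w).
Proof. exact/ghostMr/ghost_e. Qed.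

Lemma e_qD (x y : V) : e * q (x + y) = e * q x + e * q y + e * b x y.
Proof. by case: hqb => [_ [_ [_ [_ ->]]]]; rewrite !mulrDr. Qed.

Lemma e_le_qD (x y : V) : e_le (e * q x + e * q y) (e * q (x + y)).
Proof. by rewrite e_qD; apply/e_le_addl/ghostD; apply: ghost_e. Qed.

Lemma e_le_q_addl (x y : V) : e_le (e * q x) (e * q (x + y)).
Proof. exact: e_le_trans (e_le_addl _ (ghost_e hst _)) (e_le_qD x y). Qed.

Lemma e_le_q_addr (x y : V) : e_le (e * q y) (e * q (x + y)).
Proof. exact: e_le_trans (e_le_addr _ (ghost_e hst _)) (e_le_qD x y). Qed.

Lemma num_addl (x y : V) : num (x + y) = num x + num y.
Proof. by case: hqb => [_ [_ [-> _]]]; apply: e_sqrD. Qed.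

Lemma CS_addl (x y : V) :
  CS q b (x + y) w = num x * e_inv (den (x + y)) + num y * e_inv (den (x + y)).
Proof. by rewrite /CS /e_div num_addl mulrDl. Qed.

Lemma e_le_den (x y : V) : e_le (e * q x) (e * q y) -> e_le (den x) (den y).
Proof. by rewrite !(e_mulM hst); apply: e_leMr. Qed.

Variables x y : V.
Hypotheses (hx : anisotropic q x) (hy : anisotropic q y).
Hypothesis hxy : anisotropic q (x + y).

Lemma e_le_inv_den (v : V) : anisotropic q v -> e_le (e * q v) (e * q (x + y)) ->
  e_le (e_inv (den (x + y))) (e_inv (den v)).
Proof.
move=> hv le_v; apply: (e_le_inv hst hsf); try exact: ghost_e; try exact: den_neq0.
exact: e_le_den.
Qed.

Lemma e_lt_inv_den (v : V) : anisotropic q v -> e_lt (e * q v) (e * q (x + y)) ->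
  e_lt (e_inv (den (x + y))) (e_inv (den v)).
Proof.
move=> hv lt_v; apply: (e_lt_inv hst hsf); try exact: ghost_e; try exact: den_neq0.
rewrite !(e_mulM hst) ![_ * (e * q w)]mulrC.
by apply: (e_ltM2l hst hsf) lt_v; try exact: ghost_e; apply: e_q_neq0.
Qed.

Lemma CS_addl_le : e_le (CS q b (x + y) w) (CS q b x w + CS q b y w).
Proof.
rewrite CS_addl /CS /e_div; apply: e_leD; apply: e_leMl.
  exact: e_le_inv_den hx (e_le_q_addl x y).
exact: e_le_inv_den hy (e_le_q_addr x y).
Qed.

Lemma CS_addl_lt : ~ nu_cong (q (x + y)) (q x + q y) ->
  CS q b x w + CS q b y w <> 0 ->
  e_lt (CS q b (x + y) w) (CS q b x w + CS q b y w).
Proof.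
move=> ncong CS0.
have lt_qD : e_lt (e * q x + e * q y) (e * q (x + y)).
  by split; [apply: e_le_qD | rewrite -mulrDr => /esym].
have attained_eq0 (v : V) : anisotropic q v -> e_lt (e * q v) (e * q (x + y)) ->
    num v * e_inv (den (x + y)) = CS q b v w -> CS q b v w = 0.
  move=> hv lt_v; have [->|/eqP nv0] := eqVneq (num v) 0; first by rewrite mul0r.
  by case: (e_ltM2l hst hsf (ghost_e hst _) nv0 (ghost_inv_den hxy) (ghost_inv_den hv)
    (e_lt_inv_den hv lt_v)).
rewrite CS_addl /CS /e_div; apply: (e_ltD hst) => //;
  try exact/ghostMr/(ghost_e hst).
- by apply/e_leMl/e_le_inv_den/(proj1 (e_lt_addl (ghost_e hst _) lt_qD)).
- by apply/e_leMl/e_le_inv_den/(proj1 (e_lt_addr (ghost_e hst _) lt_qD)).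
- exact/attained_eq0/(e_lt_addl (ghost_e hst _) lt_qD).
- exact/attained_eq0/(e_lt_addr (ghost_e hst _) lt_qD).
Qed.

Lemma CS_addl_eq_dominant : e_le (e * q x) (e * q y) ->
  nu_cong (q (x + y)) (q x + q y) ->
  e * q x * CS q b y w = e * q y * CS q b x w \/
    CS q b x w = CS q b y w \/ nu_cong (q x) (q y) ->
  CS q b (x + y) w = CS q b x w + CS q b y w.
Proof.
move=> le_xy cong hc.
have den_xy : den (x + y) = den y.
  by rewrite !(e_mulM hst); move: cong; rewrite /nu_cong mulrDr le_xy => ->.
have [le_CS | eq_den] :
    e_le (CS q b x w) (CS q b y w) \/ e_inv (den x) = e_inv (den y).
- case: hc => [balanced | [eq_CS | cong_xy]]; [left | left | right].
  + apply: (e_leM2l hst hsf (ghost_e hst (q y))); try exact: ghost_CS.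
      exact: e_q_neq0.
    by rewrite -balanced; apply: e_leMr.
  + by rewrite eq_CS; apply/e_le_refl/ghost_CS.
  + by rewrite !(e_mulM hst) cong_xy.
- rewrite CS_addl den_xy; apply: addr_dominated le_CS.
  by rewrite /CS /e_div -den_xy; apply/e_leMl/(e_le_inv_den hx (e_le_q_addl x y)).
- by rewrite CS_addl den_xy /CS /e_div eq_den.
Qed.

End CauchySchwarzRatio.

Theorem theorem2 (R : comPzSemiRingType) (V : lSemiModType R)
    (q : V -> R) (b : V -> V -> R) (x y w : V)
    (hst : supertropical R) (hsf : eR_semifield R) (hG : G_ne_e R)
    (hqb : quadratic_pair q b)
    (hx : anisotropic q x) (hy : anisotropic q y) (hw : anisotropic q w)
    (hxy : anisotropic q (x + y)) :
  (* (a) *)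
  e_le (CS q b (x + y) w) (CS q b x w + CS q b y w) /\
  (* (b) *)
  (~ nu_cong (q (x + y)) (q x + q y) ->
     CS q b x w + CS q b y w <> 0 ->
     e_lt (CS q b (x + y) w) (CS q b x w + CS q b y w)) /\
  (* (c) *)
  (nu_cong (q (x + y)) (q x + q y) ->
     (st_e R * q x * CS q b y w = st_e R * q y * CS q b x w \/
      CS q b x w = CS q b y w \/
      nu_cong (q x) (q y)) ->
     CS q b (x + y) w = CS q b x w + CS q b y w).
Proof.
split; first exact: CS_addl_le.
split; first exact: CS_addl_lt.
move=> cong hc.
have [le_xy|le_yx] := e_le_total hst (ghost_e hst (q x)) (ghost_e hst (q y)).
  exact: CS_addl_eq_dominant.
have hyx : anisotropic q (y + x) by rewrite addrC.
rewrite addrC [CS q b x w + _]addrC.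
apply: CS_addl_eq_dominant => //; first by rewrite addrC [q y + _]addrC.
by case: hc => [/esym | [/esym | /esym]]; auto.
Qed.
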